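(* Let $m\ge0$, $n\ge1$, and let $\lambda$ be a partition with $\lambda_1<n$. Then $$\Big\{SP_\lambda(x,y_1,\dots,y_n)\,x^{\rho_m}y^{\rho_n}\Big\}=\Big\{SP_\lambda(x,y_1,\dots,y_{n-1})\,x^{\rho_m}y^{\rho_n}\Big\}.$$ Here $\{\cdot\}$ is the alternation over $S_m\times S_n$ acting on $x_1,\dots,x_m,y_1,\dots,y_n$.
   Context: For $f(x,y)$ with $x=(x_1,\dots,x_m)$ and $y=(y_1,\dots,y_n)$, set $\{f\}=\sum_{w\in S_m\times S_n}\varepsilon(w)w(f)$. Here $S_m$ permutes the $x_i$, $S_n$ permutes the $y_j$, and $\varepsilon$ is the sign. Set $x^{\rho_m}=x_1^{m-1}\cdots x_m^0$ and $y^{\rho_n}=y_1^{n-1}\cdots y_n^0$. For a partition $\mu$ and any lists of variables $x,y$, $SP_\mu(x,y)=\det(h_{\mu_r-r+s}(x,y))_{r,s=1}^{l(\mu)}$, with $SP_\emptyset=1$. The $h_a(x,y)$ are given by $\prod_j(1-ty_j)/\prod_i(1-tx_i)=\sum_{a\ge0}h_a(x,y)t^a$, and $h_a=0$ for $a<0$. *)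

From HB Require Import structures.
From mathcomp Require Import all_boot all_order all_algebra all_fingroup.
Set Implicit Arguments. Unset Strict Implicit. Unset Printing Implicit Defensive.
Import Order.TTheory GRing.Theory Num.Theory.
Local Open Scope ring_scope.

(* Polynomial identities in x_1..x_m, y_1..y_n (integer coefficients) are
   expressed as identities of evaluations in an arbitrary commutative ring R. *)

(* h_a(x,y) for a >= 0: coefficient of t^a in
   prod_j (1 - t y_j) / prod_i (1 - t x_i); the geometric series
   1/(1 - t x_i) is truncated at degree a, which does not affect t^a. *)
Definition hxy_nat (R : comNzRingType) (xs ys : seq R) (a : nat) : R :=
  ((\prod_(v <- ys) (1 - v *: 'X)) *
   \prod_(u <- xs) \sum_(k < a.+1) (u *: 'X) ^+ k)`_a.

Definition hxy (R : comNzRingType) (xs ys : seq R) (a : int) : R :=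
  match a with
  | Posz k => hxy_nat xs ys k
  | Negz _ => 0
  end.

Definition is_partition (mu : seq nat) : bool :=
  sorted geq mu && all (fun p => 0 < p)%N mu.

(* SP_mu(x,y) = det (h_{mu_r - r + s}(x,y))_{r,s = 1..l(mu)} (0-indexed here;
   mu_(r+1) - (r+1) + (s+1) = mu_(r+1) - r + s). det of the 0x0 matrix is 1. *)
Definition SP (R : comNzRingType) (mu : seq nat) (xs ys : seq R) : R :=
  \det (\matrix_(r < size mu, s < size mu)
          hxy xs ys ((nth 0%N mu r)%:Z - (r : nat)%:Z + (s : nat)%:Z)).

Definition alt (R : comNzRingType) (m n : nat)
    (f : ('I_m -> R) -> ('I_n -> R) -> R) (x : 'I_m -> R) (y : 'I_n -> R) : R :=
  \sum_(s : 'S_m) \sum_(t : 'S_n)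
     (-1) ^+ s * (-1) ^+ t * f (fun i => x (s i)) (fun j => y (t j)).

Definition xrho (R : comNzRingType) (m : nat) (x : 'I_m -> R) : R :=
  \prod_(i < m) x i ^+ (m.-1 - i)%N.

Definition vars (R : comNzRingType) (m : nat) (x : 'I_m -> R) : seq R :=
  [seq x i | i <- enum 'I_m].

From HB Require Import structures.
From mathcomp Require Import all_boot all_order all_algebra all_fingroup.
Set Implicit Arguments. Unset Strict Implicit. Unset Printing Implicit Defensive.
Import GRing.Theory Num.Theory.
Local Open Scope ring_scope.

(* Fix a permutation t of the y's and write w = y_(t n).  Since h_a(x,y) is
   symmetric and a variable occurring both among the x's and the y's cancels,
     SP(x, y_(t 1) .. y_(t (n-1))) = SP(w :: x, y) = Q(w),
     SP(x, y)                      = SP(0 :: x, y) = Q(0),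
   where Q(X) = SP(X :: x, y) is a polynomial in the extra x-variable X.
   Column operations C_s <- C_s - X C_(s-1) (from the recurrence
   h_(a+1)(X::x, y) = X h_a(X::x, y) + h_(a+1)(x, y)) make all columns but the
   first constant, so deg Q <= lam_1 <= n - 1.  Expanding Q(w) = sum_k q_k w^k,
   every term with 1 <= k <= n-1 is an alternant with two equal exponents and
   vanishes, leaving only q_0 = Q(0). *)

(* Agreement of two polynomials in all coefficients of degree <= b, i.e.
   congruence modulo X^(b+1); h_a only depends on the series up to degree a. *)
Definition coef_eq_upto (R : comNzRingType) (b : nat) (p q : {poly R}) :=
  forall i, (i <= b)%N -> p`_i = q`_i.

Lemma coef_eq_upto_mul (R : comNzRingType) b (p p' q q' : {poly R}) :
  coef_eq_upto b p p' -> coef_eq_upto b q q' -> coef_eq_upto b (p * q) (p' * q').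
Proof.
move=> hp hq i hi; rewrite !coefM; apply: eq_bigr => j _.
rewrite hp ?hq //; first exact: leq_trans (leq_subr _ _) hi.
by rewrite -ltnS; exact: leq_trans (ltn_ord j) _.
Qed.

Lemma coef_eq_upto_prod (R : comNzRingType) b (T : Type) (s : seq T)
    (F G : T -> {poly R}) :
  (forall u, coef_eq_upto b (F u) (G u)) ->
  coef_eq_upto b (\prod_(u <- s) F u) (\prod_(u <- s) G u).
Proof.
move=> h; elim: s => [|u s IH]; first by rewrite !big_nil.
by rewrite !big_cons; apply: coef_eq_upto_mul.
Qed.

Definition geom_trunc (R : comNzRingType) (u : R) (a : nat) : {poly R} :=
  \sum_(k < a.+1) (u *: 'X) ^+ k.

Lemma coef_geom_trunc (R : comNzRingType) (u : R) a i :
  (geom_trunc u a)`_i = if (i <= a)%N then u ^+ i else 0.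
Proof.
rewrite /geom_trunc coef_sum.
under eq_bigr => k _ do rewrite exprZn coefZ coefXn.
case: ifP => hi.
  rewrite (bigD1 (Ordinal (hi : (i < a.+1)%N))) //= eqxx mulr1 big1 ?addr0 // => k hk.
  case: eqP => [e|]; last by rewrite mulr0.
  by move: hk; rewrite -val_eqE /= e eqxx.
rewrite big1 // => k _; case: eqP => [e|]; last by rewrite mulr0.
by move: (ltn_ord k); rewrite -e ltnS hi.
Qed.

Lemma hxy_nat_trunc (R : comNzRingType) (xs ys : seq R) a N : (a <= N)%N ->
  hxy_nat xs ys a =
  ((\prod_(v <- ys) (1 - v *: 'X)) * \prod_(u <- xs) geom_trunc u N)`_a.
Proof.
move=> aN; apply: (coef_eq_upto_mul (b := a)) => //.
apply: coef_eq_upto_prod => u i hi.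
by rewrite !coef_geom_trunc hi (leq_trans hi aN).
Qed.

Lemma hxy_nat_cons (R : comNzRingType) (w : R) (xs ys : seq R) a :
  hxy_nat (w :: xs) ys a = \sum_(j < a.+1) hxy_nat xs ys (a - j) * w ^+ j.
Proof.
rewrite /hxy_nat big_cons mulrCA coefM; apply: eq_bigr => j _.
rewrite mulrC -(hxy_nat_trunc xs ys (leq_subr j a)) -/(geom_trunc w a).
by rewrite coef_geom_trunc -ltnS ltn_ord.
Qed.

(* A variable occurring both among the x's and the y's cancels:
   (1 - wX) / (1 - wX) = 1. *)
Lemma hxy_nat_cancel (R : comNzRingType) (w : R) (xs ys : seq R) a :
  hxy_nat (w :: xs) (w :: ys) a = hxy_nat xs ys a.
Proof.
rewrite /hxy_nat !big_cons -/(geom_trunc w a).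
set A := (1 - _); set B := \prod_(_ <- ys) _; set D := \prod_(_ <- xs) _.
have -> : A * B * (geom_trunc w a * D) = (B * D) * (A * geom_trunc w a).
  by rewrite mulrACA mulrC.
have inverse_upto : coef_eq_upto a (A * geom_trunc w a) 1.
  move=> i hi.
  rewrite mulrBl mul1r coefB -scalerAl coefZ coefXM coef_geom_trunc hi coefC.
  case: i hi => [|i] hi /=; first by rewrite expr0 mulr0 subr0.
  by rewrite coef_geom_trunc (ltnW hi) exprS subrr.
have := coef_eq_upto_mul (fun i _ => erefl ((B * D)`_i)) inverse_upto.
by rewrite mulr1; apply.
Qed.

Lemma hxy_nat_perm (R : comNzRingType) (xs xs' ys ys' : seq R) a :
  perm_eq xs xs' -> perm_eq ys ys' -> hxy_nat xs ys a = hxy_nat xs' ys' a.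
Proof. by move=> px py; rewrite /hxy_nat (perm_big _ px) (perm_big _ py). Qed.

(* h_a(X :: x, y) as a polynomial in the extra x-variable X. *)
Definition hxy_poly (R : comNzRingType) (xs ys : seq R) (a : int) : {poly R} :=
  match a with
  | Posz k => \poly_(i < k.+1) hxy_nat xs ys (k - i)
  | Negz _ => 0
  end.

Lemma hxy_poly_eval (R : comNzRingType) (w : R) (xs ys : seq R) a :
  (hxy_poly xs ys a).[w] = hxy (w :: xs) ys a.
Proof.
case: a => [k|k] /=; last by rewrite horner0.
by rewrite horner_poly hxy_nat_cons.
Qed.

Lemma hxy_poly_step (R : comNzRingType) (xs ys : seq R) (a : int) :
  hxy_poly xs ys (a + 1) - 'X * hxy_poly xs ys a = (hxy xs ys (a + 1))%:P.
Proof.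
case: a => [k|[|k]].
- rewrite -PoszD addn1 /=; apply/polyP => i.
  rewrite coefB coefXM !coef_poly coefC.
  case: i => [|i] /=; first by rewrite subr0 subn0.
  by rewrite ltnS subSS; case: ifP; rewrite ?subrr.
- have -> : Negz 0 + 1 = 0 by [].
  rewrite /= mulr0 subr0; apply/polyP => i; rewrite coef_poly coefC.
  by case: i.
- have -> : Negz k.+1 + 1 = Negz k by rewrite !NegzE -(addn1 k.+1) PoszD opprD subrK.
  by rewrite /= mulr0 subr0.
Qed.

Lemma size_hxy_poly (R : comNzRingType) (xs ys : seq R) (c : int) (N : nat) :
  c <= N%:Z -> (size (hxy_poly xs ys c) <= N.+1)%N.
Proof.
case: c => [k|k] /=; last by rewrite size_poly0.
by rewrite lez_nat => hk; apply: leq_trans (size_poly _ _) _.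
Qed.

Definition SP_polymx (R : comNzRingType) (lam : seq nat) (xs ys : seq R) :
    'M[{poly R}]_(size lam) :=
  \matrix_(r < size lam, s < size lam)
     hxy_poly xs ys ((nth 0%N lam r)%:Z - (r : nat)%:Z + (s : nat)%:Z).

Lemma SP_polymx_eval (R : comNzRingType) (lam : seq nat) (w : R) (xs ys : seq R) :
  (\det (SP_polymx lam xs ys)).[w] = SP lam (w :: xs) ys.
Proof.
rewrite -horner_evalE -det_map_mx /SP; congr (\det _); apply/matrixP => r s.
by rewrite !mxE -hxy_poly_eval.
Qed.

(* The unitriangular matrix performing C_s <- C_s - X C_(s-1) on columns. *)
Definition shift_mx (R : comNzRingType) l : 'M[{poly R}]_l :=
  \matrix_(i < l, j < l)
    (if i == j then 1 else if (j == i.+1 :> nat) then - 'X else 0).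

Lemma det_shift_mx (R : comNzRingType) l : \det (shift_mx R l) = 1.
Proof.
rewrite -det_tr det_trig; last first.
  apply/is_trig_mxP => i j hij; rewrite !mxE.
  case: eqP => [e|_]; first by move: hij; rewrite e ltnn.
  by case: eqP => // e; move: hij; rewrite e ltnNge leqnSn.
by rewrite big1 // => i _; rewrite !mxE eqxx.
Qed.

Lemma mul_shift_mx (R : comNzRingType) l (A : 'M[{poly R}]_l) r s :
  (A *m shift_mx R l) r s = A r s - \sum_(j < l | (j.+1 == s :> nat)) A r j * 'X.
Proof.
rewrite !mxE (bigD1 s) //= !mxE eqxx mulr1; congr (_ + _).
rewrite big_mkcond [in RHS]big_mkcond /= -sumrN; apply: eq_bigr => j _.
rewrite !mxE; case: (eqVneq j s) => [->|njs] /=.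
  by rewrite (gtn_eqF (ltnSn s)) oppr0.
rewrite eq_sym; case: ifP => _; first by rewrite mulrN.
by rewrite mulr0 oppr0.
Qed.

Lemma size_det_const_cols (R : comNzRingType) l (A : 'M[{poly R}]_l.+1) (N : nat) :
  (forall r (j : 'I_l), (size (A r (lift ord0 j)) <= 1)%N) ->
  (forall r, (size (A r ord0) <= N)%N) -> (size (\det A) <= N)%N.
Proof.
move=> hc h0; rewrite (expand_det_col A ord0).
apply: leq_trans (size_sum _ _ _) _; apply/bigmax_leqP => r _.
set B := row' r (col' ord0 A).
have B_const : B = map_mx polyC (map_mx (fun p : {poly R} => p`_0) B).
  by apply/matrixP => i j; rewrite !mxE -size1_polyC // hc.
have cofactor_const : (size (cofactor A r ord0) <= 1)%N.
  rewrite /cofactor -/B B_const det_map_mx.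
  have -> : (-1 : {poly R}) ^+ (r + @nat_of_ord l.+1 ord0) = ((-1) ^+ (r + 0))%:P.
    by rewrite rmorphXn rmorphN1.
  by rewrite -polyCM size_polyC_leq1.
apply: leq_trans (size_polyMleq _ _) _.
move: cofactor_const; case: (size (cofactor A r ord0)) => [|[|]] // _.
  by rewrite addn0; exact: leq_trans (leq_pred _) (h0 r).
by rewrite addn1; exact: h0.
Qed.

Lemma nth_le_head (lam : seq nat) r :
  is_partition lam -> (nth 0%N lam r <= head 0%N lam)%N.
Proof.
case/andP => hs _; case: (ltnP r (size lam)) => hr; last by rewrite nth_default.
have ht : transitive geq by move=> a b c h1 h2; exact: leq_trans h2 h1.
have := sorted_leq_nth ht (fun a => leqnn a) 0%N hs.
by case: lam hs hr => [//|a lam] hs hr /(_ 0%N r) /=; apply.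
Qed.

Lemma size_det_SP_polymx (R : comNzRingType) (lam : seq nat) (xs ys : seq R) :
  is_partition lam -> (size (\det (SP_polymx lam xs ys)) <= (head 0%N lam).+1)%N.
Proof.
move=> hp; rewrite -[\det _]mulr1 -(det_shift_mx R (size lam)) -det_mulmx.
move: hp; case: lam => [|a lam] hp; first by rewrite det_mx00 size_poly1.
apply: size_det_const_cols => r.
- move=> j; rewrite mul_shift_mx (big_pred1 (widen_ord (leqnSn _) j)); last first.
    by move=> j'; rewrite /= /bump /= add1n eqSS -val_eqE.
  rewrite !mxE /= mulrC /bump /= add1n -(addn1 j) PoszD addrA hxy_poly_step.
  exact: size_polyC_leq1.
- rewrite mul_shift_mx big_pred0 // subr0 mxE; apply: size_hxy_poly.
  rewrite addr0 lerBlDr -PoszD lez_nat.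
  exact: leq_trans (nth_le_head r hp) (leq_addr _ _).
Qed.

Lemma SP_ext (R : comNzRingType) (lam : seq nat) (xs ys xs' ys' : seq R) :
  (forall a, hxy xs ys a = hxy xs' ys' a) -> SP lam xs ys = SP lam xs' ys'.
Proof. by move=> h; rewrite /SP; congr (\det _); apply/matrixP => r s; rewrite !mxE h. Qed.

Lemma SP_perm (R : comNzRingType) (lam : seq nat) (xs ys xs' ys' : seq R) :
  perm_eq xs xs' -> perm_eq ys ys' -> SP lam xs ys = SP lam xs' ys'.
Proof. by move=> px py; apply: SP_ext => -[k|k] //=; apply: hxy_nat_perm. Qed.

Lemma SP_cancel (R : comNzRingType) (lam : seq nat) (w : R) (xs ys : seq R) :
  SP lam (w :: xs) (w :: ys) = SP lam xs ys.
Proof. by apply: SP_ext => -[k|k] //=; apply: hxy_nat_cancel. Qed.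

Lemma SP_cons0 (R : comNzRingType) (lam : seq nat) (xs ys : seq R) :
  SP lam (0 :: xs) ys = SP lam xs ys.
Proof.
apply: SP_ext => a; rewrite -hxy_poly_eval horner_coef0.
case: a => [k|k]; last by rewrite /= coef0.
by rewrite /hxy_poly coef_poly subn0.
Qed.

(* For 1 <= k <= n-1 the alternant of y_n^k y^rho_n vanishes: it is the
   determinant of the matrix (y_j^(e_i)) with exponents e = (n-1, .., 1, k),
   in which the last row equals the row of exponent k. *)
Lemma alt_power_last_eq0 (R : comNzRingType) n' (y : 'I_n'.+1 -> R) k :
  (0 < k)%N -> (k <= n')%N ->
  \sum_(t : 'S_n'.+1) (-1) ^+ t * (y (t ord_max) ^+ k * xrho (fun j => y (t j))) = 0.
Proof.
move=> k0 kn.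
pose e (i : 'I_n'.+1) := if i == ord_max then k else (n' - i)%N.
pose A := \matrix_(i < n'.+1, j < n'.+1) y j ^+ e i.
have i1lt : (n' - k < n'.+1)%N by rewrite ltnS leq_subr.
have detA0 : \det A = 0.
  apply: (determinant_alternate (i1 := Ordinal i1lt) (i2 := ord_max)).
    by rewrite -val_eqE /= neq_ltn ltn_subrL k0 /= (leq_trans k0 kn).
  move=> j; rewrite !mxE /e /= eqxx; case: eqP => // _.
  by rewrite subKn.
rewrite -[RHS]detA0 /determinant; apply: eq_bigr => t _; congr (_ * _).
rewrite /xrho /= (bigD1 ord_max) //= [in RHS](bigD1 ord_max) //= !mxE /e eqxx.
rewrite subnn expr0 mul1r; congr (_ * _).
by apply: eq_bigr => i hi; rewrite mxE /e (negbTE hi).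
Qed.

Lemma vars_perm (R : comNzRingType) n (y : 'I_n -> R) (t : 'S_n) :
  perm_eq (vars (fun j => y (t j))) (vars y).
Proof.
have -> : vars (fun j => y (t j)) = [seq y i | i <- [seq t j | j <- enum 'I_n]].
  by rewrite /vars; elim: (enum 'I_n) => //= a s ->.
apply: perm_map; apply: uniq_perm.
- by rewrite (map_inj_uniq (@perm_inj _ t)) enum_uniq.
- exact: enum_uniq.
move=> i; rewrite mem_enum; apply/mapP; exists (t^-1 i)%g; first by rewrite mem_enum.
by rewrite permKV.
Qed.

Lemma vars_take (R : comNzRingType) n' (y : 'I_n'.+1 -> R) :
  perm_eq (y ord_max :: take n' (vars y)) (vars y).
Proof.
rewrite /vars enum_ordSr map_rcons -cats1 take_size_cat; last first.
  by rewrite !size_map -enumT size_enum_ord.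
by rewrite -cat1s perm_catC.
Qed.

Lemma alt_SP_drop_last (R : comNzRingType) n' (lam : seq nat)
    (hlam : is_partition lam) (hl1 : (head 0%N lam < n'.+1)%N)
    (xs : seq R) (y : 'I_n'.+1 -> R) :
  \sum_(t : 'S_n'.+1) (-1) ^+ t *
     (SP lam xs (vars (fun j => y (t j))) * xrho (fun j => y (t j))) =
  \sum_(t : 'S_n'.+1) (-1) ^+ t *
     (SP lam xs (take n' (vars (fun j => y (t j)))) * xrho (fun j => y (t j))).
Proof.
set Q := \det (SP_polymx lam xs (vars y)).
have size_Q : (size Q <= n'.+1)%N := leq_trans (size_det_SP_polymx xs (vars y) hlam) hl1.
have SP_drop (t : 'S_n'.+1) :
    SP lam xs (take n' (vars (fun j => y (t j)))) = Q.[y (t ord_max)].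
  rewrite SP_polymx_eval -(SP_cancel lam (y (t ord_max))); apply: SP_perm => //.
  exact: perm_trans (vars_take (fun j => y (t j))) (vars_perm y t).
have SP_full (t : 'S_n'.+1) : SP lam xs (vars (fun j => y (t j))) = Q`_0.
  by rewrite -horner_coef0 SP_polymx_eval SP_cons0; apply: SP_perm => //; apply: vars_perm.
under [RHS]eq_bigr => t _ do rewrite SP_drop (horner_coef_wide _ size_Q) mulr_suml mulr_sumr.
rewrite exchange_big big_ord_recl /= [X in _ = _ + X]big1 ?addr0.
  by apply: eq_bigr => t _; rewrite SP_full expr0 mulr1.
move=> k _; under eq_bigr => t _ do rewrite -mulrA mulrCA.
by rewrite -mulr_sumr alt_power_last_eq0 ?mulr0 // -ltnS.
Qed.

Theorem lemma2p3 (R : comNzRingType) (m n : nat) (lam : seq nat)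
    (hn : (1 <= n)%N) (hlam : is_partition lam) (hl1 : (head 0%N lam < n)%N)
    (x : 'I_m -> R) (y : 'I_n -> R) :
  alt (fun x' y' => SP lam (vars x') (vars y') * xrho x' * xrho y') x y =
  alt (fun x' y' => SP lam (vars x') (take n.-1 (vars y')) * xrho x' * xrho y') x y.
Proof.
case: n hn hl1 y => [//|n'] _ hl1 y.
rewrite /alt; apply: eq_bigr => s _.
have regroup (a b c d e : R) : a * b * (c * d * e) = (a * d) * (b * (c * e)).
  by rewrite !mulrA; congr (_ * e); rewrite [a * b * c * d]mulrAC [a * b * d]mulrAC.
under eq_bigr => t _ do rewrite regroup.
under [RHS]eq_bigr => t _ do rewrite regroup.
by rewrite -!mulr_sumr (alt_SP_drop_last hlam hl1).
Qed.
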